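(* Let $P,Q\in\mathrm{Mat}_d(\mathbb{Q})$. Then $P,Q$ are irreducible if and only if $P$ and $Q$ are invertible and the characteristic polynomial of $P^{-1}Q$ is irreducible over $\mathbb{Q}$.
   Context: Matrices $P,Q\in\mathrm{Mat}_d(\mathbb{Q})$ are called irreducible if there are no non-trivial subspaces $U,V$ of $\mathbb{Q}^d$ of the same dimension (non-trivial meaning neither $\{0\}$ nor $\mathbb{Q}^d$) such that $PU\subseteq V$ and $QU\subseteq V$. *)

From HB Require Import structures.
From mathcomp Require Import all_boot all_order all_algebra.
Set Implicit Arguments. Unset Strict Implicit. Unset Printing Implicit Defensive.
Import GRing.Theory Num.Theory.
Local Open Scope ring_scope.

(* Subspaces of Q^d are represented as row spaces of d x d matrices over rat.
   Vectors of Q^d are column vectors acted on by P (u |-> P u); on row vectors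
   (the MathComp convention for row spaces) this action is u |-> u *m P^T.
   So "P U ⊆ V" is (U *m P^T <= V)%MS. *)
Definition mx_pair_irreducible (d : nat) (P Q : 'M[rat]_d) : Prop :=
  ~ exists U V : 'M[rat]_d,
      [/\ \rank U = \rank V, (0 < \rank U)%N, (\rank U < d)%N,
          (U *m P^T <= V)%MS & (U *m Q^T <= V)%MS].

(* If P is singular, a line of ker P together with a line containing its image
   under Q violates irreducibility, and symmetrically for Q.  If P is
   invertible, a subspace U is mapped by P and Q into a subspace of the same
   dimension exactly when U is stable under A = P^-1 Q (acting on row vectors
   through the transpose), so irreducibility of the pair means that A has no
   proper nontrivial invariant subspace.  For a single matrix this is
   equivalent to irreducibility of its characteristic polynomial: the minimal
   polynomial of the restriction of A to an invariant subspace divides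
   char_poly A and has smaller degree; conversely a proper factor q of
   char_poly A gives the invariant subspace ker q(A), which can be neither 0
   nor everything because no nonzero polynomial of degree < dim annihilates A,
   as otherwise the Krylov space of any nonzero vector would be a proper
   invariant subspace. *)

From HB Require Import structures.
From mathcomp Require Import all_boot all_order all_algebra.
From mathcomp Require Import zify.
Import GRing.Theory Num.Theory.
Local Open Scope ring_scope.

Section EndoIrreducible.
Context {F : fieldType} {n : nat}.
Local Notation N := n.+1.
Variable A : 'M[F]_N.

Definition mx_endo_irreducible : Prop :=
  forall U : 'M[F]_N, (0 < \rank U < N)%N -> ~~ stablemx U A.

Definition krylov_mx (u : 'rV[F]_N) m : 'M[F]_(m, N) :=
  \matrix_(i < m) (u *m A ^+ i).

Lemma horner_rVpoly_krylov u m (v : 'rV[F]_m) :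
  u *m horner_mx A (rVpoly v) = v *m krylov_mx u m.
Proof.
rewrite horner_rVpoly [v *m powers_mx _ _]mulmx_sum_row.
rewrite [v *m krylov_mx _ _]mulmx_sum_row linear_sum mulmx_sumr.
by apply: eq_bigr => i _; rewrite !rowK linearZ /= mxvecK scalemxAr.
Qed.

Lemma horner_mx_sub_krylov u (r : {poly F}) m : (size r <= m)%N ->
  (u *m horner_mx A r <= krylov_mx u m)%MS.
Proof.
by move=> le_r_m; rewrite -(poly_rV_K le_r_m) horner_rVpoly_krylov submxMl.
Qed.

Local Notation d := (degree_mxminpoly A).

Lemma horner_mx_sub_krylov_minpoly u (r : {poly F}) :
  (u *m horner_mx A r <= krylov_mx u d)%MS.
Proof.
rewrite -[horner_mx A r](mx_inv_hornerK (horner_mx_mem A r)) horner_mxK.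
exact/horner_mx_sub_krylov/size_mod_mxminpoly.
Qed.

Lemma sub_krylov_minpoly u : (u <= krylov_mx u d)%MS.
Proof. by have := horner_mx_sub_krylov_minpoly u 1; rewrite rmorph1 mulmx1. Qed.

Lemma stable_krylov_minpoly u : stablemx (krylov_mx u d) A.
Proof.
apply/row_subP => i; rewrite row_mul rowK -mulmxA -[_ *m A]/(A ^+ i * A).
have -> : A ^+ i * A = horner_mx A ('X ^+ i.+1).
  by rewrite rmorphXn /= horner_mx_X exprSr.
exact: horner_mx_sub_krylov_minpoly.
Qed.

Lemma endo_irreducible_degree_mxminpoly :
  mx_endo_irreducible -> (N <= degree_mxminpoly A)%N.
Proof.
move=> irrA; rewrite leqNgt; apply/negP => lt_d_N.
pose u : 'rV[F]_N := const_mx 1.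
have u_neq0 : u != 0.
  by apply/eqP => /matrixP/(_ 0 0)/eqP; rewrite !mxE oner_eq0.
suff: ~~ stablemx <<krylov_mx u d>>%MS A.
  by rewrite (eqmx_stable _ (genmxE _)) stable_krylov_minpoly.
apply: irrA; rewrite mxrank_gen (leq_ltn_trans (rank_leq_row _) lt_d_N) andbT.
rewrite lt0n mxrank_eq0; apply: contra u_neq0 => /eqP K0.
by rewrite -submx0 (submx_trans (sub_krylov_minpoly u)) // K0 sub0mx.
Qed.

Lemma endo_irreducible_annihilator_size (g : {poly F}) :
  mx_endo_irreducible -> g != 0 -> horner_mx A g = 0 -> (N < size g)%N.
Proof.
move=> irrA g_neq0 gA0; apply: leq_trans (dvdp_leq g_neq0 (mxminpoly_min gA0)).
by rewrite size_mxminpoly ltnS endo_irreducible_degree_mxminpoly.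
Qed.

Lemma endo_irreducible_char_poly :
  mx_endo_irreducible -> irreducible_poly (char_poly A).
Proof.
move=> irrA; split=> [|q q_neq1 dvd_q_char]; first by rewrite size_char_poly.
have char_neq0 := monic_neq0 (char_poly_monic A).
have q_neq0 : q != 0 by apply: contraNneq char_neq0 => q0; rewrite -dvd0p -q0.
rewrite -dvdp_size_eqp // size_char_poly eqn_leq -{1}(size_char_poly A).
rewrite dvdp_leq //=.
set qA := horner_mx A q.
have stab_ker : stablemx (kermx qA) A.
  exact/comm_mx_stable_ker/comm_horner_mx/comm_mx_refl.
have [ker0 | ker_gt0] := posnP (\rank (kermx qA)).
  have qA_unit : qA \in unitmx.
    by rewrite -row_free_unit -kermx_eq0 -mxrank_eq0 ker0.
  have [h def_char] := dvdpP _ _ dvd_q_char.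
  have h_neq0 : h != 0.
    by apply: contraNneq char_neq0 => h0; rewrite def_char h0 mul0r.
  have hA0 : horner_mx A h = 0.
    have := Cayley_Hamilton A; rewrite def_char rmorphM /= -/qA -mulmxE.
    by move=> hqA0; rewrite -(mulmxK qA_unit (horner_mx A h)) hqA0 mul0mx.
  have := endo_irreducible_annihilator_size h irrA h_neq0 hA0.
  have := size_mul h_neq0 q_neq0; rewrite -def_char size_char_poly -subn1.
  have : (1 < size q)%N by rewrite ltn_neqAle eq_sym q_neq1 size_poly_gt0.
  move: (size h) (size q) => a b; lia.
have [ker_lt | ker_full] := ltnP (\rank (kermx qA)) N.
  by have := irrA (kermx qA); rewrite ker_gt0 ker_lt stab_ker => /(_ isT).
apply: endo_irreducible_annihilator_size => //.
have ker_unit : kermx qA \in unitmx.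
  by rewrite -row_full_unit /row_full eqn_leq rank_leq_col.
by rewrite -/qA -(mulKmx ker_unit qA) mulmx_ker mulmx0.
Qed.

Lemma char_poly_irreducible_endo :
  irreducible_poly (char_poly A) -> mx_endo_irreducible.
Proof.
move=> irrA U /andP[rU_gt0 rU_lt_N]; apply/negP => stabU.
have : row_free (row_base U) /\ stablemx (row_base U) A.
  by rewrite row_base_free stablemx_row_base.
move: (row_base U) rU_gt0 rU_lt_N; case: (\rank U) => [//|m] V _ lt_m_N.
case=> freeV stabV.
set B := conjmx V A.
have dvd_B_char : mxminpoly B %| char_poly A.
  exact: dvdp_trans (mxminpoly_conj freeV stabV) (mxminpoly_dvd_char A).
have /eqp_size size_B : mxminpoly B %= char_poly A.
  apply: irrA.2 dvd_B_char.
  by rewrite size_mxminpoly eqSS -lt0n mxminpoly_nonconstant.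
have := dvdp_leq (monic_neq0 (char_poly_monic B)) (mxminpoly_dvd_char B).
by rewrite size_B !size_char_poly ltnS leqNgt lt_m_N.
Qed.

Lemma endo_irreducible_charP :
  mx_endo_irreducible <-> irreducible_poly (char_poly A).
Proof.
split; first exact: endo_irreducible_char_poly.
exact: char_poly_irreducible_endo.
Qed.

End EndoIrreducible.

Lemma char_poly_trmx {R : comNzRingType} {n : nat} (A : 'M[R]_n) :
  char_poly A^T = char_poly A.
Proof.
rewrite /char_poly -[RHS]det_tr; congr (\det _).
by rewrite /char_poly_mx linearB /= tr_scalar_mx map_trmx.
Qed.

Lemma pair_image_stablemx {F : fieldType} {n : nat} {P : 'M[F]_n}
    (Q U : 'M[F]_n) :
  P \in unitmx ->
  (exists V : 'M_n,
     [/\ \rank U = \rank V, (U *m P^T <= V)%MS & (U *m Q^T <= V)%MS])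
  <-> stablemx U (invmx P *m Q)^T.
Proof.
move=> P_unit; have PT_unit : P^T \in unitmx by rewrite unitmx_tr.
have PT_free : row_free P^T by rewrite row_free_unit.
rewrite trmx_mul trmx_inv -(submxMfree _ _ PT_free) !mulmxA mulmxKV //.
split=> [[V [rkUV sUP sUQ]] | sUQ]; last first.
  by exists (U *m P^T); split; rewrite ?mxrankMfree.
have /eqmxP defV : (U *m P^T == V)%MS.
  by rewrite -(mxrank_leqif_eq sUP) mxrankMfree // rkUV.
by rewrite defV.
Qed.

Lemma mx_pair_irreducibleC {d : nat} {P Q : 'M[rat]_d} :
  mx_pair_irreducible P Q -> mx_pair_irreducible Q P.
Proof. by move=> irrPQ [U [V [? ? ? ? ?]]]; apply: irrPQ; exists U, V. Qed.

Lemma mx_pair_irreducible_unitmx {d : nat} {P Q : 'M[rat]_d} : (1 < d)%N ->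
  mx_pair_irreducible P Q -> P \in unitmx.
Proof.
move=> d_gt1 irrPQ; apply: contraT => P_nonunit; exfalso.
have /rowV0Pn[u /sub_kermxP uP0 u_neq0] : kermx P^T != 0.
  by rewrite kermx_eq0 row_free_unit unitmx_tr.
have [v v_neq0 uQv] : exists2 v : 'rV_d, v != 0 & (u *m Q^T <= v)%MS.
  have [uQ0 | uQ_neq0] := eqVneq (u *m Q^T) 0; last by exists (u *m Q^T).
  by exists u; rewrite // uQ0 sub0mx.
apply: irrPQ; exists <<u>>%MS, <<v>>%MS.
rewrite !mxrank_gen !rank_rV u_neq0 v_neq0 !(eqmxMr _ (genmxE _)) !genmxE.
by rewrite uP0 sub0mx.
Qed.

Lemma mx_pair_irreducible_endo {n : nat} {P : 'M[rat]_n.+1} (Q : 'M[rat]_n.+1) :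
  P \in unitmx ->
  mx_pair_irreducible P Q <-> mx_endo_irreducible (invmx P *m Q)^T.
Proof.
move=> P_unit; split=> [irrPQ U rU | irrA [U [V [rkUV rU_gt0 rU_lt sUP sUQ]]]].
  apply/negP => /(pair_image_stablemx Q U P_unit) [V [rkUV sUP sUQ]].
  by case/andP: rU => rU_gt0 rU_lt; apply: irrPQ; exists U, V.
have := irrA U; rewrite rU_gt0 rU_lt => /(_ isT)/negP; apply.
by apply/(pair_image_stablemx Q U P_unit); exists V.
Qed.

Theorem theorem5p2 (d : nat) (hd : (2 <= d)%N) (P Q : 'M[rat]_d) :
  mx_pair_irreducible P Q <->
  [/\ P \in unitmx, Q \in unitmx & irreducible_poly (char_poly (invmx P *m Q))].
Proof.
case: d => [//|n] in hd P Q *; rewrite -char_poly_trmx.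
split=> [irrPQ | [P_unit _ /endo_irreducible_charP]]; last first.
  by move/(mx_pair_irreducible_endo Q P_unit).
have P_unit := mx_pair_irreducible_unitmx hd irrPQ.
have Q_unit := mx_pair_irreducible_unitmx hd (mx_pair_irreducibleC irrPQ).
by split=> //; apply/endo_irreducible_charP/(mx_pair_irreducible_endo Q P_unit).
Qed.
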